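(* Let $a,\hat c$ be real with $a\ne0,1$, and let $\mathcal F=(F_1,F_2)$ be a pair of finite sets of positive integers. Then the polynomials $m_n^{a,\hat c;\mathcal F}$, $n\in\sigma_{\mathcal F}$, are common eigenfunctions of the second order difference operator $D_{\mathcal F}=h_{-1}(x)\mathfrak S_{-1}+h_0(x)\mathfrak S_0+h_1(x)\mathfrak S_1$, where $h_{-1}(x)=\frac{x\,\Omega^{a,\hat c}_{\mathcal F}(x+1)}{(a-1)\Omega^{a,\hat c}_{\mathcal F}(x)}$, $h_0(x)=-\frac{(1+a)(x+k)+a\hat c}{a-1}+u_{\mathcal F}+\Delta\Big(\frac{a(x+\hat c+k-1)\Lambda^{a,\hat c}_{\mathcal F}(x)}{(a-1)\Omega^{a,\hat c}_{\mathcal F}(x)}\Big)$, $h_1(x)=\frac{a(x+\hat c+k)\Omega^{a,\hat c}_{\mathcal F}(x)}{(a-1)\Omega^{a,\hat c}_{\mathcal F}(x+1)}$, and $D_{\mathcal F}(m_n^{a,\hat c;\mathcal F})=n\,m_n^{a,\hat c;\mathcal F}$ for $n\in\sigma_{\mathcal F}$.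
   Context: $k_i=|F_i|$, $k=k_1+k_2$. Meixner polynomials $m_n^{a,c}(x)=\frac{a^n}{(1-a)^n}\sum_{j=0}^n a^{-j}\binom{x}{j}\binom{-x-c}{n-j}$. $\Omega^{a,c}_{\mathcal F}(x)$ is the $k\times k$ determinant with rows $\big(m_f^{a,c}(x+j-1)\big)_{j=1}^k$ for $f\in F_1$ (increasing), followed by rows $\big(m_f^{1/a,c}(x+j-1)/a^{j-1}\big)_{j=1}^k$ for $f\in F_2$. $\Lambda^{a,c}_{\mathcal F}(x)$ is the $k\times k$ determinant obtained from $\Omega^{a,c}_{\mathcal F}(x)$ by replacing the last column ($j=k$, entries at $x+k-1$) by the entries $m_f^{a,c}(x+k)$ for $f\in F_1$ and $m_f^{1/a,c}(x+k)/a^k$ for $f\in F_2$. $u_{\mathcal F}=\sum_{f\in F_1}f+\sum_{f\in F_2}f-\binom{k_1+1}{2}-\binom{k_2}{2}$; $\sigma_{\mathcal F}=\{u_{\mathcal F},u_{\mathcal F}+1,\dots\}\setminus\{u_{\mathcal F}+f:f\in F_1\}$. For $n\in\sigma_{\mathcal F}$, $m_n^{a,\hat c;\mathcal F}(x)$ is the $(k+1)\times(k+1)$ determinant with first row $\big(m^{a,\hat c}_{n-u_{\mathcal F}}(x+j-1)\big)_{j=1}^{k+1}$, then rows $\big(m_f^{a,\hat c}(x+j-1)\big)_{j=1}^{k+1}$, $f\in F_1$, then rows $\big(m_f^{1/a,\hat c}(x+j-1)/a^{j-1}\big)_{j=1}^{k+1}$, $f\in F_2$. $\mathfrak S_l p(x)=p(x+l)$,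 $\Delta f(x)=f(x+1)-f(x)$. *)

From mathcomp Require Import all_boot all_order all_algebra.
Set Implicit Arguments. Unset Strict Implicit. Unset Printing Implicit Defensive.
Import Order.TTheory GRing.Theory Num.Theory.
Local Open Scope ring_scope.

Definition gbinom (R : realFieldType) (y : R) (j : nat) : R :=
  (\prod_(i < j) (y - i%:R)) / (j`!)%:R.

Definition meixner (R : realFieldType) (a c : R) (n : nat) (x : R) : R :=
  (a ^+ n / (1 - a) ^+ n) *
  \sum_(j < n.+1) (a ^- j * gbinom x j * gbinom (- x - c) (n - j)).

(* Entry of row i (0-indexed), at shift t : row i < size F1 is
   m_{F1_i}^{a,c}(x+t); row size F1 + i' is m_{F2_i'}^{1/a,c}(x+t)/a^t. *)
Definition rowEntry (R : realFieldType) (a c : R) (F1 F2 : seq nat)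
  (i t : nat) (x : R) : R :=
  if (i < size F1)%N then meixner a c (nth 0%N F1 i) (x + t%:R)
  else meixner a^-1 c (nth 0%N F2 (i - size F1)) (x + t%:R) / a ^+ t.

Definition kF (F1 F2 : seq nat) : nat := (size F1 + size F2)%N.

Definition Omega (R : realFieldType) (a c : R) (F1 F2 : seq nat) (x : R) : R :=
  \det (\matrix_(i < kF F1 F2, j < kF F1 F2) rowEntry a c F1 F2 i j x).

(* Last column (j = k-1, shift k-1) replaced by shift k.  For k = 0 there is
   no column to replace; we set Lambda = 0. *)
Definition Lambda (R : realFieldType) (a c : R) (F1 F2 : seq nat) (x : R) : R :=
  if kF F1 F2 == 0%N then 0 else
  \det (\matrix_(i < kF F1 F2, j < kF F1 F2)
          rowEntry a c F1 F2 i (if j == (kF F1 F2).-1 :> nat then kF F1 F2 else j) x).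

(* u_F = sum F1 + sum F2 - C(k1+1,2) - C(k2,2)  (always >= 0 for sets of
   positive integers, so computing in nat is exact). *)
Definition uF (F1 F2 : seq nat) : nat :=
  (sumn F1 + sumn F2 - 'C((size F1).+1, 2) - 'C(size F2, 2))%N.

Definition in_sigmaF (F1 F2 : seq nat) (n : nat) : bool :=
  (uF F1 F2 <= n)%N && ((n - uF F1 F2)%N \notin F1).

Definition meixnerF (R : realFieldType) (a c : R) (F1 F2 : seq nat) (n : nat)
  (x : R) : R :=
  \det (\matrix_(i < (kF F1 F2).+1, j < (kF F1 F2).+1)
     (if i == 0%N :> nat then meixner a c (n - uF F1 F2) (x + j%:R)
      else rowEntry a c F1 F2 i.-1 j x)).

Definition hm1 (R : realFieldType) (a c : R) (F1 F2 : seq nat) (x : R) : R :=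
  x * Omega a c F1 F2 (x + 1) / ((a - 1) * Omega a c F1 F2 x).

Definition h1 (R : realFieldType) (a c : R) (F1 F2 : seq nat) (x : R) : R :=
  a * (x + c + (kF F1 F2)%:R) * Omega a c F1 F2 x
  / ((a - 1) * Omega a c F1 F2 (x + 1)).

Definition gF (R : realFieldType) (a c : R) (F1 F2 : seq nat) (x : R) : R :=
  a * (x + c + (kF F1 F2)%:R - 1) * Lambda a c F1 F2 x
  / ((a - 1) * Omega a c F1 F2 x).

Definition h0 (R : realFieldType) (a c : R) (F1 F2 : seq nat) (x : R) : R :=
  - (((1 + a) * (x + (kF F1 F2)%:R) + a * c) / (a - 1)) + (uF F1 F2)%:R
  + (gF a c F1 F2 (x + 1) - gF a c F1 F2 x).

Definition DF (R : realFieldType) (a c : R) (F1 F2 : seq nat) (p : R -> R)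
  (x : R) : R :=
  hm1 a c F1 F2 x * p (x - 1) + h0 a c F1 F2 x * p x + h1 a c F1 F2 x * p (x + 1).

(* Write x = b + 1 and view every row of the determinants as a sequence in
   the shift t: the Meixner polynomial m_f^{a,c}(b + t) and the rescaled
   m_f^{1/a,c}(b + t) / a^t.  Dividing the classical difference equation of
   the Meixner polynomials by a - 1 shows that all these rows satisfy one and
   the same three-term recurrence in t, with eigenvalues f, -(f + c) and, for
   the leading row of m_n^{a,c;F}, n - u_F.

   The central algebraic
   fact (casorati_eigen) is a Casorati identity: if the k rows and the
   bordering row are eigenfunctions of a three-term recurrence, a certain
   combination of bordered determinants at shifts 0, 1, 2 equals the
   eigenvalue times a product of Casorati determinants.  It is proved first
   for a bordering row vanishing at the shifts 1, ..., k, where everything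
   reduces to extreme cofactors, and in general by subtracting a combination
   of the rows.  Finally Omega, Lambda and m_n^{a,c;F} at b + s are identified
   with these determinants up to a power of the row scaling, and clearing
   denominators in D_F gives the theorem. *)

From mathcomp Require Import all_boot all_order all_algebra.
From mathcomp Require Import ring zify.
Import Order.TTheory GRing.Theory Num.Theory.
Local Open Scope ring_scope.
Set Implicit Arguments. Unset Strict Implicit. Unset Printing Implicit Defensive.

Section GeneralizedBinomial.
Variable R : realFieldType.
Implicit Types (y : R) (j : nat).

Lemma gbinom0 y : gbinom y 0 = 1.
Proof. by rewrite /gbinom big_ord0 fact0 divr1. Qed.

Lemma gbinomS y j : j.+1%:R * gbinom y j.+1 = (y - j%:R) * gbinom y j.
Proof.
rewrite /gbinom big_ord_recr /= factS natrM.
have fact_neq0 : (j`!)%:R != 0 :> R by rewrite pnatr_eq0 -lt0n fact_gt0.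
by field; rewrite fact_neq0 addrC natr1 pnatr_eq0.
Qed.

Lemma gbinomS_addr1 y j : j.+1%:R * gbinom (y + 1) j.+1 = (y + 1) * gbinom y j.
Proof.
rewrite /gbinom big_ord_recl /= factS natrM subr0.
have -> : \prod_(i < j) (y + 1 - (bump 0 i)%:R) = \prod_(i < j) (y - i%:R).
  by apply: eq_bigr => i _; rewrite /bump add1n -natr1; ring.
have fact_neq0 : (j`!)%:R != 0 :> R by rewrite pnatr_eq0 -lt0n fact_gt0.
by field; rewrite fact_neq0 addrC natr1 pnatr_eq0.
Qed.

Lemma gbinom_subr1 y j : y * gbinom (y - 1) j = (y - j%:R) * gbinom y j.
Proof. by rewrite -gbinomS -[y in RHS](subrK 1) gbinomS_addr1 subrK. Qed.

Lemma gbinomD1 y j : gbinom (y + 1) j.+1 = gbinom y j.+1 + gbinom y j.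
Proof.
apply: (@mulfI _ j.+1%:R); first by rewrite pnatr_eq0.
by rewrite mulrDr gbinomS_addr1 gbinomS -natr1; ring.
Qed.

End GeneralizedBinomial.

Section MeixnerDifferenceEquation.
Variables (R : realFieldType) (a c : R) (n : nat).
Hypothesis a_neq0 : a != 0.
Implicit Types (y : R) (j : nat).

Definition mterm y j : R := gbinom y j * gbinom (- y - c) (n - j).

(* The term at y - 1 in terms of the terms at y (Pascal's rule in the second
   factor). *)
Lemma mterm_subr1 y j : (j <= n)%N ->
  y * mterm (y - 1) j =
  (y - j%:R) * mterm y j + (if (j < n)%N then j.+1%:R * mterm y j.+1 else 0).
Proof.
move=> le_jn; rewrite /mterm mulrA gbinom_subr1 (_ : - (y - 1) - c = - y - c + 1); last by ring.
case: ltnP => [lt_jn|ge_jn]; last first.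
  have -> : j = n by apply/eqP; rewrite eqn_leq le_jn.
  by rewrite subnn !gbinom0 addr0 mulrA.
rewrite -(subnSK lt_jn) gbinomD1 [j.+1%:R * _]mulrA gbinomS; ring.
Qed.

Lemma mterm_addr1 y j : (j <= n)%N ->
  (y + c) * mterm (y + 1) j =
  (y + c + (n - j)%:R) * mterm y j
  - (if j is j'.+1 then (n - j')%:R * mterm y j' else 0).
Proof.
move=> le_jn; rewrite /mterm (_ : - (y + 1) - c = - y - c - 1); last by ring.
have upper : (y + c) * gbinom (- y - c - 1) (n - j) =
             (y + c + (n - j)%:R) * gbinom (- y - c) (n - j).
  by rewrite (_ : y + c = - (- y - c)) ?mulNr ?gbinom_subr1; ring.
case: j le_jn upper => [|j] le_jn upper; first by rewrite !gbinom0 subr0 !mul1r upper.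
rewrite gbinomD1 -(subnSK le_jn); set m := (n - j.+1)%N.
have lower : m.+1%:R * (gbinom y j * gbinom (- y - c) m.+1) =
             gbinom y j * ((- y - c - m%:R) * gbinom (- y - c) m).
  by rewrite mulrCA gbinomS.
transitivity ((gbinom y j.+1 + gbinom y j) * ((y + c) * gbinom (- y - c - 1) m)).
  by ring.
by rewrite upper lower; ring.
Qed.

(* The boundary term whose discrete derivative absorbs the off-diagonal parts
   of mterm_subr1 and mterm_addr1; it vanishes at j = 0 and j = n + 1. *)
Definition mflux y j : R :=
  if j is j'.+1 then
    a ^- j' * ((if (j' < n)%N then j'.+1%:R * mterm y j'.+1 else 0)
               + (n - j')%:R * mterm y j')
  else 0.

Lemma mterm_difference y j : (j <= n)%N ->
  a ^- j * (y * mterm (y - 1) j - ((1 + a) * y + a * c) * mterm y j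
            + a * ((y + c) * mterm (y + 1) j))
  = (a - 1) * n%:R * (a ^- j * mterm y j) + (mflux y j.+1 - mflux y j).
Proof.
move=> le_jn; rewrite mterm_subr1 // mterm_addr1 // /mflux natrB //.
case: j le_jn => [|j] le_jn; first by rewrite expr0 invr1 subr0; ring.
rewrite le_jn natrB ?(ltnW le_jn) // exprS.
by field; rewrite a_neq0 expf_neq0.
Qed.

End MeixnerDifferenceEquation.

Lemma meixner_difference (R : realFieldType) (a c : R) (n : nat) (y : R) :
  a != 0 ->
  y * meixner a c n (y - 1) - ((1 + a) * y + a * c) * meixner a c n y
  + a * (y + c) * meixner a c n (y + 1) = (a - 1) * n%:R * meixner a c n y.
Proof.
move=> a_neq0; rewrite /meixner.
set K := a ^+ n / (1 - a) ^+ n.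
transitivity (K * \sum_(j < n.+1) a ^- j * (y * mterm c n (y - 1) j
     - ((1 + a) * y + a * c) * mterm c n y j + a * ((y + c) * mterm c n (y + 1) j))).
  rewrite /mterm !mulr_sumr -!sumrB -big_split /=.
  by apply: eq_bigr => j _; ring.
rewrite (eq_bigr _ (fun (j : 'I_n.+1) _ => @mterm_difference _ a c n a_neq0 y j (ltn_ord j))).
rewrite big_split /= -(big_mkord xpredT (fun j => mflux a c n y j.+1 - mflux a c n y j)).
rewrite telescope_sumr // /mflux ltnn subnn mul0r addr0 mulr0 subr0 addr0.
rewrite !mulr_sumr; apply: eq_bigr => j _; rewrite /mterm; ring.
Qed.

Section CasoratiDeterminants.
Variables (R : fieldType) (k : nat) (Y : nat -> nat -> R).

Definition casorati (o : nat) : R := \det (\matrix_(i < k, j < k) Y i (j + o)%N).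

Definition casorati_skip (o : nat) : R := if k == 0%N then 0 else
  \det (\matrix_(i < k, j < k) Y i ((if j == k.-1 :> nat then k else j) + o)%N).

Definition bordered (r : nat -> R) (o : nat) : R :=
  \det (\matrix_(i < k.+1, j < k.+1)
          (if i == 0%N :> nat then r (j + o)%N else Y i.-1 (j + o)%N)).

Definition bordered_cofactor (o j : nat) : R :=
  (-1) ^+ j * \det (\matrix_(i < k, j' < k) Y i (bump j j' + o)%N).

Lemma bordered_expand r o :
  bordered r o = \sum_(j < k.+1) r (j + o)%N * bordered_cofactor o j.
Proof.
rewrite /bordered (expand_det_row _ ord0); apply: eq_bigr => j _.
rewrite /cofactor /bordered_cofactor add0n !mxE /=; congr (_ * (_ * \det _)).
by apply/matrixP => i' j'; rewrite !mxE lift0.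
Qed.

Lemma bordered_row i o : (i < k)%N -> bordered (Y i) o = 0.
Proof.
move=> lt_ik; pose i' : 'I_k.+1 := Ordinal (lt_ik : (i.+1 < k.+1)%N).
by apply: (@determinant_alternate _ _ _ ord0 i') => // j; rewrite !mxE.
Qed.

Lemma eq_bordered r1 r2 o :
  (forall j, (j < k.+1)%N -> r1 (j + o)%N = r2 (j + o)%N) ->
  bordered r1 o = bordered r2 o.
Proof. by move=> eq_r; rewrite !bordered_expand; apply: eq_bigr => j _; rewrite eq_r. Qed.

Lemma borderedZ r (l : R) o : bordered (fun t => l * r t) o = l * bordered r o.
Proof. by rewrite !bordered_expand mulr_sumr; apply: eq_bigr => j _; rewrite mulrA. Qed.

Lemma borderedD r1 r2 o :
  bordered (fun t => r1 t + r2 t) o = bordered r1 o + bordered r2 o.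
Proof. by rewrite !bordered_expand -big_split; apply: eq_bigr => j _; rewrite mulrDl. Qed.

Lemma bordered_sub_rows r (w : 'I_k -> R) o :
  bordered (fun t => r t - \sum_(i < k) w i * Y i t) o = bordered r o.
Proof.
rewrite !bordered_expand; under eq_bigr do rewrite mulrBl mulr_suml.
rewrite sumrB exchange_big /= [X in _ - X]big1 ?subr0 // => i _.
transitivity (w i * bordered (Y i) o); last by rewrite bordered_row ?mulr0.
by rewrite bordered_expand mulr_sumr; apply: eq_bigr => j _; rewrite mulrA.
Qed.

Lemma bordered_cofactor0 o : bordered_cofactor o 0 = casorati o.+1.
Proof.
rewrite /bordered_cofactor /casorati expr0 mul1r; congr (\det _).
by apply/matrixP => i j; rewrite !mxE /bump leq0n add1n addnS.
Qed.

Lemma bordered_cofactor_last o : bordered_cofactor o k = (-1) ^+ k * casorati o.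
Proof.
rewrite /bordered_cofactor /casorati; congr (_ * \det _).
by apply/matrixP => i j; rewrite !mxE /bump leqNgt ltn_ord add0n.
Qed.

Lemma bordered_cofactor_penult o : (0 < k)%N ->
  bordered_cofactor o k.-1 = (-1) ^+ k.-1 * casorati_skip o.
Proof.
rewrite lt0n => k_neq0; rewrite /bordered_cofactor /casorati_skip (negbTE k_neq0).
congr (_ * \det _); apply/matrixP => i j; rewrite !mxE /bump.
case: eqP => [->|j_neq]; first by rewrite leqnn add1n prednK ?lt0n.
have lt_j : (j < k.-1)%N.
  by rewrite ltn_neqAle -ltnS prednK ?lt0n // ltn_ord andbT; apply/eqP.
by rewrite leqNgt lt_j.
Qed.

Lemma bordered_head r o :
  (forall j, (0 < j <= k)%N -> r (j + o)%N = 0) ->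
  bordered r o = r o * casorati o.+1.
Proof.
move=> r0; rewrite bordered_expand big_ord_recl add0n bordered_cofactor0.
by rewrite big1 ?addr0 // => j _; rewrite r0 ?mul0r //=.
Qed.

Lemma bordered_tail r o :
  (forall j, (j < k)%N -> r (j + o)%N = 0) ->
  bordered r o = (-1) ^+ k * r (k + o)%N * casorati o.
Proof.
move=> r0; rewrite bordered_expand big_ord_recr /= bordered_cofactor_last.
by rewrite big1 ?add0r => [|j _]; [ring | rewrite r0 ?mul0r].
Qed.

Lemma bordered_tail2 r o : (0 < k)%N ->
  (forall j, (j < k.-1)%N -> r (j + o)%N = 0) ->
  bordered r o = (-1) ^+ k.-1 * r (k.-1 + o)%N * casorati_skip o
                 + (-1) ^+ k * r (k + o)%N * casorati o.
Proof.
move=> k_gt0 r0; pose F j := r (j + o)%N * bordered_cofactor o j.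
have k_eq : k = k.-1.+1 by rewrite prednK.
rewrite bordered_expand -(big_mkord xpredT F) big_nat_recr //=.
rewrite (big_cat_nat (leq0n k.-1) (leq_pred k)) /=.
rewrite [X in _ + X + _](_ : _ = F k.-1); last first.
  by rewrite [in X in \sum_(_ <= _ < X) _]k_eq big_nat1.
rewrite big_nat_cond big1 ?add0r => [|j /andP[/andP[_ lt_j] _]]; last first.
  by rewrite /F r0 ?mul0r.
by rewrite /F bordered_cofactor_penult // bordered_cofactor_last; ring.
Qed.

Lemma casorati_span (p : nat -> R) : casorati 1 != 0 ->
  exists w : 'I_k -> R, forall t, (0 < t <= k)%N -> p t = \sum_(i < k) w i * Y i t.
Proof.
move=> cas_neq0; pose M := \matrix_(i < k, j < k) Y i (j + 1)%N.
have M_unit : M \in unitmx by rewrite unitmxE unitfE.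
pose v := \row_(j < k) p (j + 1)%N.
exists (fun i => (v *m invmx M) 0 i) => t /andP[t_gt0 le_tk].
have lt_t : (t.-1 < k)%N by rewrite prednK.
move: (mulmxKV M_unit v) => /matrixP/(_ 0 (Ordinal lt_t)).
rewrite !mxE /= addn1 prednK // => <-.
by apply: eq_bigr => i _; rewrite !mxE /= addn1 prednK.
Qed.

End CasoratiDeterminants.

Section CasoratiIdentity.
Variables (R : fieldType) (al be ga : nat -> R).

Definition recurrence_op (q : nat -> R) (t : nat) : R :=
  al t * q t.-1 + be t * q t + ga t * q t.+1.

(* The combination of bordered determinants that the difference operator of
   the main theorem produces once all its coefficients are cleared. *)
Definition casorati_form (k : nat) (Y : nat -> nat -> R) (p : nat -> R) : R :=
  al 1 * casorati k Y 2 ^+ 2 * bordered k Y p 0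
  + (be k.+1 * casorati k Y 1 * casorati k Y 2
     + ga k.+1 * casorati_skip k Y 2 * casorati k Y 1
     - ga k * casorati_skip k Y 1 * casorati k Y 2) * bordered k Y p 1
  + ga k.+1 * casorati k Y 1 ^+ 2 * bordered k Y p 2.

(* The identity for a bordering row vanishing at the shifts 1, ..., k: all
   bordered determinants then reduce to their extreme cofactors. *)
Lemma casorati_form_vanishing k Y q :
  (forall t, (0 < t <= k)%N -> q t = 0) ->
  casorati_form k Y q = casorati k Y 1 * casorati k Y 2 * bordered k Y (recurrence_op q) 1.
Proof.
rewrite /casorati_form /recurrence_op.
case: k Y => [|k] Y q0.
  by rewrite /casorati /casorati_skip /bordered !det_mx00 !det_mx11 !mxE /=; ring.
rewrite !borderedD (@bordered_head _ _ Y q 0) ?(@bordered_tail _ _ Y q 1)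
  ?(@bordered_tail2 _ _ Y q 2) ?(@bordered_head _ _ Y (fun t => al t * q t.-1) 1)
  ?(@bordered_tail _ _ Y (fun t => be t * q t) 1)
  ?(@bordered_tail2 _ _ Y (fun t => ga t * q t.+1) 1) //.
all: try by move=> j hj; rewrite ?addn0 ?addn1 ?addn2 /= q0 ?mulr0 //; lia.
by rewrite /= ?addn1 ?addn2 !exprS; ring.
Qed.

Lemma recurrence_op_sub_rows k (Y : nat -> nat -> R) (w : 'I_k -> R) p t :
  recurrence_op (fun s => p s - \sum_(i < k) w i * Y i s) t =
  recurrence_op p t - \sum_(i < k) w i * recurrence_op (Y i) t.
Proof.
transitivity (recurrence_op p t - \sum_(i < k) (al t * (w i * Y i t.-1)
                + be t * (w i * Y i t) + ga t * (w i * Y i t.+1))).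
  by rewrite /recurrence_op !big_split /= -!mulr_sumr; ring.
by congr (_ - _); apply: eq_bigr => i _; rewrite /recurrence_op !mulrDr !(mulrCA (w i)).
Qed.

(* If the rows are eigenfunctions of the recurrence at the shifts 1, ..., k+1
   and their Casorati determinant at shift 1 is nonzero, the identity holds
   for every bordering row: both sides only see it modulo the rows. *)
Lemma casorati_identity k Y (lam : nat -> R) p :
  (forall i t, (i < k)%N -> (0 < t <= k.+1)%N ->
     recurrence_op (Y i) t = lam i * Y i t) ->
  casorati k Y 1 != 0 ->
  casorati_form k Y p = casorati k Y 1 * casorati k Y 2 * bordered k Y (recurrence_op p) 1.
Proof.
move=> rows_eig cas_neq0; have [w pE] := casorati_span p cas_neq0.
pose q t := p t - \sum_(i < k) w i * Y i t.
transitivity (casorati_form k Y q); first by rewrite /casorati_form !bordered_sub_rows.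
rewrite casorati_form_vanishing => [|t t_in]; last by rewrite /q -pE ?subrr.
rewrite -(bordered_sub_rows Y (recurrence_op p) (fun i => w i * lam i)).
congr (_ * _); apply: eq_bordered => j lt_j; rewrite recurrence_op_sub_rows.
by congr (_ - _); apply: eq_bigr => i _; rewrite rows_eig ?mulrA ?addn1.
Qed.

Lemma casorati_eigen k Y (lam : nat -> R) (lam0 : R) p :
  (forall i t, (i < k)%N -> (0 < t <= k.+1)%N ->
     recurrence_op (Y i) t = lam i * Y i t) ->
  (forall t, (0 < t <= k.+1)%N -> recurrence_op p t = lam0 * p t) ->
  casorati k Y 1 != 0 ->
  casorati_form k Y p = lam0 * casorati k Y 1 * casorati k Y 2 * bordered k Y p 1.
Proof.
move=> rows_eig p_eig cas_neq0; rewrite (casorati_identity _ rows_eig cas_neq0).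
rewrite (@eq_bordered _ _ Y _ (fun t => lam0 * p t)) ?borderedZ; first by ring.
by move=> j lt_j; rewrite p_eig ?addn1.
Qed.

End CasoratiIdentity.

Lemma det_scale_rows (R : comPzRingType) n (A B : 'M[R]_n) (d : 'I_n -> R) :
  (forall i j, A i j = d i * B i j) -> \det A = \prod_i d i * \det B.
Proof.
move=> AE; have -> : A = diag_mx (\row_i d i) *m B.
  by rewrite mul_diag_mx; apply/matrixP => i j; rewrite !mxE AE.
by rewrite det_mulmx det_diag; congr (_ * _); apply: eq_bigr => i _; rewrite mxE.
Qed.

Section MeixnerCasorati.
Variables (R : realFieldType) (a c : R) (F1 F2 : seq nat).
Hypotheses (a_neq0 : a != 0) (a_neq1 : a != 1).

Let k := kF F1 F2.

Definition meixner_rows (x : R) (i t : nat) : R := rowEntry a c F1 F2 i t x.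

(* Moving the base point by one multiplies a row of the second family by a. *)
Definition row_scale (i : nat) : R := if (i < size F1)%N then 1 else a.

Definition rows_scale : R := \prod_(i < k) row_scale i.

Lemma rows_scale_neq0 : rows_scale != 0.
Proof. by apply/prodf_neq0 => i _; rewrite /row_scale; case: ifP; rewrite ?oner_neq0. Qed.

Lemma rowEntry_shift i t x s :
  rowEntry a c F1 F2 i t (x + s%:R) = row_scale i ^+ s * rowEntry a c F1 F2 i (t + s) x.
Proof.
rewrite /rowEntry /row_scale natrD addrA [x + s%:R + _]addrAC.
by case: ifP => _; rewrite ?expr1n ?mul1r // exprD; field; rewrite !expf_neq0.
Qed.

Lemma Omega_shift x s :
  Omega a c F1 F2 (x + s%:R) = rows_scale ^+ s * casorati k (meixner_rows x) s.
Proof.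
rewrite /Omega (@det_scale_rows _ _ _ (\matrix_(i < k, j < k) meixner_rows x i (j + s)%N)
  (fun i => row_scale i ^+ s)) ?prodrXl // => i j.
by rewrite !mxE rowEntry_shift.
Qed.

Lemma Lambda_shift x s :
  Lambda a c F1 F2 (x + s%:R) = rows_scale ^+ s * casorati_skip k (meixner_rows x) s.
Proof.
rewrite /Lambda /casorati_skip -/k; case: ifP => _; first by rewrite mulr0.
rewrite (@det_scale_rows _ _ _ (\matrix_(i < k, j < k)
  meixner_rows x i ((if j == k.-1 :> nat then k else j) + s)%N)
  (fun i => row_scale i ^+ s)) ?prodrXl // => i j.
by rewrite !mxE rowEntry_shift.
Qed.

Definition leading_row (n : nat) (x : R) (t : nat) : R :=
  meixner a c (n - uF F1 F2) (x + t%:R).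

Lemma meixnerF_shift n x s :
  meixnerF a c F1 F2 n (x + s%:R) =
  rows_scale ^+ s * bordered k (meixner_rows x) (leading_row n x) s.
Proof.
pose d (i : 'I_k.+1) := if i == 0%N :> nat then 1 else row_scale i.-1 ^+ s.
rewrite /meixnerF /bordered -/k (@det_scale_rows _ _ _ (\matrix_(i < k.+1, j < k.+1)
  (if i == 0%N :> nat then leading_row n x (j + s)%N else meixner_rows x i.-1 (j + s)%N)) d)
  => [|i j].
  by rewrite big_ord_recl mul1r prodrXl.
rewrite !mxE /d; case: ifP => _; last by rewrite rowEntry_shift.
by rewrite mul1r /leading_row natrD; congr meixner; ring.
Qed.

(* Coefficients of the three-term recurrence in the shift t, at base point b,
   obtained by dividing the Meixner difference equation by a - 1. *)
Definition rec_al (b : R) (t : nat) : R := (b + t%:R) / (a - 1).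
Definition rec_be (b : R) (t : nat) : R := - ((1 + a) * (b + t%:R) + a * c) / (a - 1).
Definition rec_ga (b : R) (t : nat) : R := a * (b + t%:R + c) / (a - 1).

Let a1_neq0 : a - 1 != 0. Proof. by rewrite subr_eq0. Qed.

Lemma shift_pred (b : R) (t : nat) : (0 < t)%N -> b + t.-1%:R = b + t%:R - 1.
Proof. by case: t => // t _; rewrite -natr1 addrA addrK. Qed.

Lemma shift_succ (b : R) (t : nat) : b + t.+1%:R = b + t%:R + 1.
Proof. by rewrite -natr1 addrA. Qed.

Lemma meixner_recurrence (f : nat) b t : (0 < t)%N ->
  recurrence_op (rec_al b) (rec_be b) (rec_ga b) (fun s => meixner a c f (b + s%:R)) t
  = f%:R * meixner a c f (b + t%:R).
Proof.
move=> t_gt0; rewrite /recurrence_op /rec_al /rec_be /rec_ga shift_pred // shift_succ.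
set y := b + t%:R; have deq := meixner_difference c f y a_neq0.
transitivity ((y * meixner a c f (y - 1) - ((1 + a) * y + a * c) * meixner a c f y
              + a * (y + c) * meixner a c f (y + 1)) / (a - 1)).
  by rewrite /y; field.
by rewrite deq; field.
Qed.

Lemma dual_meixner_recurrence (f : nat) b t : (0 < t)%N ->
  recurrence_op (rec_al b) (rec_be b) (rec_ga b)
    (fun s => meixner a^-1 c f (b + s%:R) / a ^+ s) t
  = - (f%:R + c) * (meixner a^-1 c f (b + t%:R) / a ^+ t).
Proof.
move=> t_gt0; rewrite /recurrence_op /rec_al /rec_be /rec_ga shift_pred // shift_succ.
have powE : a ^+ t = a * a ^+ t.-1 by rewrite -exprS prednK.
rewrite exprS powE; set y := b + t%:R; set A := a ^+ t.-1.
have A_neq0 : A != 0 by rewrite expf_neq0.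
have deq := meixner_difference c f y (invr_neq0 a_neq0).
transitivity ((a * (y * meixner a^-1 c f (y - 1)
    - ((1 + a^-1) * y + a^-1 * c) * meixner a^-1 c f y
    + a^-1 * (y + c) * meixner a^-1 c f (y + 1))
    - c * (a - 1) * meixner a^-1 c f y) / ((a - 1) * (a * A))).
  by field; rewrite a_neq0 A_neq0.
by rewrite deq; field; rewrite a_neq0 A_neq0.
Qed.

Definition row_eigenvalue (i : nat) : R :=
  if (i < size F1)%N then (nth 0%N F1 i)%:R else - ((nth 0%N F2 (i - size F1))%:R + c).

Lemma meixner_rows_recurrence b i t : (0 < t)%N ->
  recurrence_op (rec_al b) (rec_be b) (rec_ga b) (meixner_rows b i) t
  = row_eigenvalue i * meixner_rows b i t.
Proof.
move=> t_gt0; rewrite /meixner_rows /rowEntry /row_eigenvalue; case: ifP => _.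
  exact: meixner_recurrence.
exact: dual_meixner_recurrence.
Qed.

Lemma casorati_neq0 b s :
  Omega a c F1 F2 (b + s%:R) != 0 -> casorati k (meixner_rows b) s != 0.
Proof. by rewrite Omega_shift mulf_eq0 negb_or => /andP[]. Qed.

Lemma DF_meixnerF n b :
  casorati k (meixner_rows b) 1 != 0 -> casorati k (meixner_rows b) 2 != 0 ->
  DF a c F1 F2 (meixnerF a c F1 F2 n) (b + 1) =
  rows_scale * casorati_form (rec_al b) (rec_be b) (rec_ga b) k (meixner_rows b)
                 (leading_row n b)
    / (casorati k (meixner_rows b) 1 * casorati k (meixner_rows b) 2)
  + (uF F1 F2)%:R * meixnerF a c F1 F2 n (b + 1).
Proof.
move=> cas1 cas2; have S_neq0 := rows_scale_neq0.
rewrite /DF /hm1 /h0 /h1 /gF.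
have shift0 : b + 1 - 1 = b + 0%:R by rewrite addrK addr0.
have shift2 : b + 1 + 1 = b + 2%:R by rewrite mulr2n addrA.
have shift1 : b + 1 = b + 1%:R by rewrite mulr1n.
rewrite shift0 shift2 shift1 !Omega_shift !Lambda_shift !meixnerF_shift expr0 mul1r.
rewrite /casorati_form /rec_al /rec_be /rec_ga -/k.
by field; rewrite a1_neq0 cas1 cas2 S_neq0.
Qed.

End MeixnerCasorati.

Unset Implicit Arguments.

Theorem mainTheorem7 (R : realFieldType) (a c : R) (F1 F2 : seq nat) :
  a != 0 -> a != 1 ->
  sorted ltn F1 -> sorted ltn F2 ->
  all (fun f => 0 < f)%N F1 -> all (fun f => 0 < f)%N F2 ->
  forall n : nat, in_sigmaF F1 F2 n ->
  forall x : R, Omega a c F1 F2 x != 0 -> Omega a c F1 F2 (x + 1) != 0 ->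
  DF a c F1 F2 (meixnerF a c F1 F2 n) x = n%:R * meixnerF a c F1 F2 n x.
Proof.
move=> a_neq0 a_neq1 _ _ _ _ n /andP[le_un _] x.
rewrite -[x](subrK 1); move: (x - 1) => b Omega1 Omega2.
have cas1 : casorati (kF F1 F2) (meixner_rows a c F1 F2 b) 1 != 0.
  exact: casorati_neq0.
have cas2 : casorati (kF F1 F2) (meixner_rows a c F1 F2 b) 2 != 0.
  by apply: casorati_neq0 => //; rewrite mulr2n addrA.
rewrite DF_meixnerF // (casorati_eigen (lam := row_eigenvalue c F1 F2)
  (lam0 := (n - uF F1 F2)%:R)) ?cas1 //; last first.
- by move=> t /andP[t_gt0 _]; exact: meixner_recurrence.
- by move=> i t _ /andP[t_gt0 _]; exact: meixner_rows_recurrence.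
have shift1 : b + 1 = b + 1%:R by rewrite mulr1n.
rewrite shift1 meixnerF_shift // expr1 natrB //.
by field; rewrite cas1 cas2.
Qed.
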